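(* Let $P$ and $Q$ be finite posets and let $f : P \to Q$ be a $\chi$-distinguished map. Then for every function $h : Q \to \mathbb{Z}$, \[ \int_{Q} h \, d\chi = \int_{P} (f^* h) \, d\chi , \] where $f^*h = h \circ f$.
   Context: For a finite poset $P$, the zeta function is the $P \times P$ matrix with $\zeta(x,y)=1$ if $x \le y$ and $0$ otherwise; it is invertible, and the Euler characteristic is $\chi(P) = \sum_{x,y} \zeta^{-1}(x,y)$ ($\chi(\emptyset)=0$). A filter is an upward-closed subset; $\delta_S$ is the indicator function of $S$. Every $g : P \to \mathbb{Z}$ can be written as $g = \sum_i a_i \delta_{S_i}$ with $a_i \in \mathbb{Z}$ and $S_i$ filters of $P$; the Euler calculus is $\int_P g\, d\chi = \sum_i a_i \chi(S_i)$, independent of the representation. An order-preserving map $f : P \to Q$ is $\chi$-distinguished if $\chi(f^{-1}(Q_{\ge x})) = 1$ for every $x \in Q$, where $Q_{\ge x} = \{y \in Q \mid y \ge x\}$ (with $f^{-1}(Q_{\ge x})$ given the order induced from $P$). *)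

From HB Require Import structures.
From mathcomp Require Import all_boot all_order all_algebra.
Set Implicit Arguments. Unset Strict Implicit. Unset Printing Implicit Defensive.
Import Order.TTheory GRing.Theory Num.Theory.
Local Open Scope ring_scope.
Local Open Scope order_scope.

Section EulerCalculus.
Context {d : Order.disp_t} {P : finPOrderType d}.

Definition zeta_mx (S : {set P}) : 'M[int]_#|S| :=
  \matrix_(i < #|S|, j < #|S|)
    (((@enum_val P (mem S) i <= @enum_val P (mem S) j)%O : bool)%:R : int).

Definition euler_char (S : {set P}) : int :=
  (\sum_(i < #|S|) \sum_(j < #|S|) (invmx (zeta_mx S)) i j)%R.

Definition is_filter (S : {set P}) : Prop :=
  forall x y : P, x \in S -> x <= y -> y \in S.

Definition filter_rep (g : P -> int) (s : seq (int * {set P})) : Prop :=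
  (forall p, p \in s -> is_filter p.2) /\
  forall x : P, g x = (\sum_(p <- s) p.1 * ((x \in p.2 : bool)%:R))%R.

(* the value  sum_i a_i chi(S_i)  of the Euler integral computed from s *)
Definition rep_integral (s : seq (int * {set P})) : int :=
  (\sum_(p <- s) p.1 * euler_char p.2)%R.

End EulerCalculus.

Definition chi_distinguished {d1 d2 : Order.disp_t}
  {P : finPOrderType d1} {Q : finPOrderType d2} (f : P -> Q) : Prop :=
  {homo f : x y / x <= y} /\
  forall x : Q, euler_char (f @^-1: [set y : Q | x <= y]) = 1%R.

(* A weighting of a finite poset is a function v with sum_(y >= x) v y = 1 for
   every x; it exists because the zeta matrix is unipotent.  The up-closure of
   any x in a filter S stays in S, so v restricted to S solves zeta_S v = 1 and
   chi(S) = sum_(x in S) v x.  Hence the Euler integral of g is sum_x g x v x.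
   For a chi-distinguished f, summing v over the fibres of f yields a weighting
   of Q, because its sum over Q_(>= x) is the weighting sum over f^-1(Q_(>= x)),
   i.e. chi(f^-1(Q_(>= x))) = 1; regrouping sum_p h (f p) v p by fibres ends
   the proof. *)
From HB Require Import structures.
From mathcomp Require Import all_boot all_order all_algebra.
Import Order.TTheory GRing.Theory Num.Theory.
Set Implicit Arguments. Unset Strict Implicit. Unset Printing Implicit Defensive.
Local Open Scope ring_scope.

Section UnipotentMatrix.
Variables (R : comUnitRingType) (n : nat) (N : 'M[R]_n).

Local Notation mxpow k := (iter k (mulmx N) 1%:M).

Lemma mulmx_1D_alternating_sum m :
  (1%:M + N) *m (\sum_(k < m) (-1) ^+ k *: mxpow k) = 1%:M - (-1) ^+ m *: mxpow m.
Proof.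
elim: m => [|m IH]; first by rewrite big_ord0 mulmx0 expr0 scale1r subrr.
rewrite big_ord_recr /= mulmxDr IH -scalemxAr mulmxDl mul1mx exprS.
by rewrite mulN1r scaleNr opprK scalerDr addrA subrK.
Qed.

Lemma unitmx_1D_nilpotent m : mxpow m = 0 -> 1%:M + N \in unitmx.
Proof.
move=> Nm0; have := mulmx_1D_alternating_sum m.
by rewrite Nm0 scaler0 subr0 => /mulmx1_unit[].
Qed.

Variable r : 'I_n -> nat.
Hypothesis N_rank : forall i j, N i j != 0 -> (r i < r j)%N.

Lemma mxpow_rank k i j : mxpow k i j != 0 -> (k + r i <= r j)%N.
Proof.
elim: k i j => [|k IH] i j /=.
  by rewrite mxE; have [-> | _] := eqVneq i j; rewrite ?eqxx.
rewrite mxE; apply: contraR => rank_bad.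
apply/eqP/big1 => l _; have [Nil0 | Nil] := eqVneq (N i l) 0; first by rewrite Nil0 mul0r.
have [mx0 | mx] := eqVneq (mxpow k l j) 0; first by rewrite mx0 mulr0.
case/negP: rank_bad; rewrite addSn.
by apply: leq_trans (IH _ _ mx); rewrite ltn_add2l (N_rank Nil).
Qed.

Lemma unitmx_1D_rank_increasing : 1%:M + N \in unitmx.
Proof.
apply: (@unitmx_1D_nilpotent (\max_i r i).+1); apply/matrixP => i j.
rewrite [RHS]mxE; apply/eqP/negPn/negP => /mxpow_rank.
by rewrite addSn ltnNge (leq_trans (leq_bigmax j)) ?leq_addr.
Qed.

End UnipotentMatrix.

Section Weighting.
Context {d : Order.disp_t} {P : finPOrderType d}.
Local Open Scope order_scope.

Lemma card_strict_down_lt (x y : P) :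
  x < y -> (#|[set z | (z < x)%O]| < #|[set z | (z < y)%O]|)%N.
Proof.
move=> lt_xy; have down_sub : x |: [set z | z < x] \subset [set z | z < y].
  by apply/subsetP => z; rewrite !inE => /predU1P[-> // | /lt_trans]; apply.
by have := subset_leq_card down_sub; rewrite cardsU1 inE ltxx.
Qed.

Lemma zeta_mx_unit (S : {set P}) : zeta_mx S \in unitmx.
Proof.
rewrite -[zeta_mx S](addrNK 1%:M) addrC.
apply: (@unitmx_1D_rank_increasing _ _ _ (fun i => #|[set z | z < enum_val i]|)) => i j.
rewrite !mxE; have [-> | ne] := eqVneq i j; first by rewrite lexx subrr eqxx.
rewrite subr0 pnatr_eq0 eqb0 negbK => le_ij; apply: card_strict_down_lt.
by rewrite lt_neqAle le_ij andbT (inj_eq enum_val_inj).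
Qed.

Definition weighting (v : P -> int) : Prop := forall x, \sum_(y | x <= y) v y = 1.

Lemma zeta_mx_mulmx_entry (S : {set P}) (u : 'cV[int]_#|S|) i :
  (zeta_mx S *m u) i 0 = \sum_(j < #|S| | enum_val i <= enum_val j) u j 0.
Proof.
rewrite mxE [RHS]big_mkcond; apply: eq_bigr => j _.
by rewrite mxE; case: ifP; rewrite ?mul1r ?mul0r.
Qed.

Lemma zeta_mx_weighting (S : {set P}) (v : P -> int) :
  is_filter S -> weighting v -> zeta_mx S *m \col_i v (enum_val i) = const_mx 1.
Proof.
move=> S_filter v_weighting; apply/matrixP => i k; rewrite [k]ord1 zeta_mx_mulmx_entry mxE.
under eq_bigr do rewrite mxE.
rewrite -(big_enum_val_cond (>= enum_val i) v) -(v_weighting (enum_val i)).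
by apply: eq_bigl => y; rewrite andb_idl // => /(S_filter _ _ (enum_valP i)).
Qed.

Lemma euler_char_weighting (S : {set P}) (v : P -> int) :
  is_filter S -> weighting v -> euler_char S = \sum_(x in S) v x.
Proof.
move=> S_filter v_weighting.
have v_col : \col_i v (enum_val i) = invmx (zeta_mx S) *m const_mx 1.
  by rewrite -(zeta_mx_weighting S_filter v_weighting) mulKmx ?zeta_mx_unit.
rewrite /euler_char (big_enum_val v); apply: eq_bigr => i _.
have := congr1 (fun u : 'cV_#|S| => u i 0) v_col; rewrite !mxE => ->.
by apply: eq_bigr => j _; rewrite mxE mulr1.
Qed.

Lemma weighting_exists : exists v : P -> int, weighting v.
Proof.
pose w : 'cV_#|[set: P]| := invmx (zeta_mx [set: P]) *m const_mx 1.
pose rank (x : P) := enum_rank_in (in_setT x) x.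
exists (fun x => w (rank x) 0) => x.
have rankK : cancel (@enum_val _ (mem [set: P])) rank.
  by move=> j; rewrite /rank enum_valK_in.
have := congr1 (fun u : 'cV_#|[set: P]| => u (rank x) 0) (mulKVmx (zeta_mx_unit _) (const_mx 1)).
have rankKV : enum_val (rank x) = x by rewrite enum_rankK_in ?in_setT.
rewrite zeta_mx_mulmx_entry mxE rankKV => <-.
transitivity (\sum_(y in [set: P] | x <= y) w (rank y) 0).
  by apply: eq_bigl => y; rewrite in_setT.
by rewrite big_enum_val_cond; apply: eq_bigr => j _; rewrite rankK.
Qed.
End Weighting.

Lemma rep_integral_weighting {d} {P : finPOrderType d} (v g : P -> int)
    (s : seq (int * {set P})) :
  weighting v -> filter_rep g s -> rep_integral s = \sum_x g x * v x.
Proof.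
move=> v_weighting [s_filters g_rep]; rewrite /rep_integral.
transitivity (\sum_(p <- s) \sum_x p.1 * (x \in p.2)%:R * v x).
  rewrite big_seq [RHS]big_seq; apply: eq_bigr => p p_s.
  rewrite (euler_char_weighting (s_filters p p_s) v_weighting) big_mkcond mulr_sumr.
  by apply: eq_bigr => x _; case: (x \in p.2); rewrite ?mulr1 ?mulr0 ?mul0r.
by rewrite exchange_big; apply: eq_bigr => x _; rewrite g_rep mulr_suml.
Qed.

Section Pushforward.
Context {d1 d2 : Order.disp_t} {P : finPOrderType d1} {Q : finPOrderType d2}.
Variable f : P -> Q.
Local Open Scope order_scope.

Lemma is_filter_up (x : Q) : is_filter [set y | x <= y].
Proof. by move=> y z; rewrite !inE => /le_trans; apply. Qed.

Lemma is_filter_preimset (S : {set Q}) :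
  {homo f : x y / x <= y} -> is_filter S -> is_filter (f @^-1: S).
Proof. by move=> f_homo S_filter x y; rewrite !inE => fx_S /f_homo; apply: S_filter. Qed.

Definition fiber_sum (v : P -> int) (q : Q) : int := \sum_(p | f p == q) v p.

Lemma fiber_sum_weighting (v : P -> int) :
  chi_distinguished f -> weighting v -> weighting (fiber_sum v).
Proof.
move=> [f_homo f_chi] v_weighting x.
rewrite -(f_chi x) (euler_char_weighting _ v_weighting); last first.
  exact/is_filter_preimset/is_filter_up.
rewrite (partition_big f (>= x)) => [|p]; last by rewrite !inE.
apply: eq_bigr => y x_y; apply: eq_bigl => p.
by rewrite !inE; case: eqP => [-> | _]; rewrite ?x_y ?andbF.
Qed.

Lemma sum_mul_fiber_sum (v : P -> int) (h : Q -> int) :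
  \sum_q h q * fiber_sum v q = \sum_p h (f p) * v p.
Proof.
rewrite (partition_big f predT) //; apply: eq_bigr => q _.
by rewrite mulr_sumr; apply: eq_bigr => p /eqP <-.
Qed.
End Pushforward.

Theorem theorem4p10 (d1 d2 : Order.disp_t)
  (P : finPOrderType d1) (Q : finPOrderType d2) (f : P -> Q)
  (hf : chi_distinguished f) (h : Q -> int)
  (sQ : seq (int * {set Q})) (sP : seq (int * {set P})) :
  filter_rep h sQ -> filter_rep (h \o f) sP ->
  rep_integral sQ = rep_integral sP.
Proof.
move=> h_rep hf_rep; have [v v_weighting] := weighting_exists (P := P).
rewrite (rep_integral_weighting v_weighting hf_rep).
rewrite (rep_integral_weighting (fiber_sum_weighting hf v_weighting) h_rep).
exact: sum_mul_fiber_sum.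
Qed.
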